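(* Let $S_2=\epsilon_2$, $S_3=\epsilon_3$ and $S_n=K_{n-3}+\epsilon_3$ for $n\ge4$, and let $R(r)=\frac{1}{2\sqrt{1-r^2}}$ with $R^j$ its $j$-fold composition ($R^0$ the identity). For $n\in\{2,3\}$, $S_n$ admits a spherical embedding of dimension $n-1$ and radius $r$ for every $0<r<1$. For $n\ge4$, $S_n$ admits a spherical embedding of dimension $n-1$ and radius $r$ for every $r$ with $R^{n-4}(1/2)<r<1$, but admits no spherical embedding of dimension $n-1$ and radius $r$ with $r<R^{n-4}(1/2)$.
   Context: $\epsilon_k$ is the graph with $k$ vertices and no edges; $G+H$ is obtained from disjoint copies of $G$ and $H$ by adding all edges between them. A unit-distance embedding of a graph $G$ in $\mathbb{R}^n$ is an injective map $f$ from the vertex set of $G$ to $\mathbb{R}^n$ such that $|f(u)-f(v)|=1$ for every edge $uv$ and no point $f(w)$ lies on the segment $[f(u),f(v)]$ for an edge $uv$ with $w\notin\{u,v\}$. $G$ admits a spherical embedding of dimension $k$ and radius $r$ if $G$ has a unit-distance embedding in $\mathbb{R}^k$ all of whose vertices lie on a sphere $\{x\in\mathbb{R}^k:|x-c|=r\}$. *)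

From HB Require Import structures.
From mathcomp Require Import all_boot all_order all_algebra.
From mathcomp Require Import reals.
Set Implicit Arguments. Unset Strict Implicit. Unset Printing Implicit Defensive.
Import Order.TTheory GRing.Theory Num.Theory.
Local Open Scope ring_scope.

Record graph := Graph { vert : finType; adj : rel vert }.

Definition eps (k : nat) : graph := @Graph 'I_k (fun _ _ => false).
Definition complete (m : nat) : graph := @Graph 'I_m (fun i j => i != j).
(* G + H : disjoint union plus all edges between the two parts *)
Definition join (G H : graph) : graph :=
  @Graph (vert G + vert H)%type
    (fun x y => match x, y with
                | inl a, inl b => adj a b
                | inr a, inr b => adj a b
                | _, _ => true
                end).

Definition S_graph (n : nat) : graph :=
  match n with
  | 0 | 1 | 2 | 3 => eps n
  | _ => join (complete (n - 3)) (eps 3)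
  end.

Definition edist (R : realType) (k : nat) (x y : 'rV[R]_k) : R :=
  Num.sqrt (\sum_(i < k) (x ord0 i - y ord0 i) ^+ 2).

Definition on_segment (R : realType) (k : nat) (p a b : 'rV[R]_k) : Prop :=
  exists t : R, 0 <= t <= 1 /\ p = (1 - t) *: a + t *: b.

Definition unit_distance_embedding (R : realType) (G : graph) (k : nat)
    (f : vert G -> 'rV[R]_k) : Prop :=
  injective f /\
  (forall u v : vert G, adj u v -> edist (f u) (f v) = 1) /\
  (forall u v w : vert G, adj u v -> w != u -> w != v ->
     ~ on_segment (f w) (f u) (f v)).

Definition spherical_embedding (R : realType) (G : graph) (k : nat) (r : R) : Prop :=
  exists (f : vert G -> 'rV[R]_k) (c : 'rV[R]_k),
    @unit_distance_embedding R G k f /\ forall v : vert G, edist (f v) c = r.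

Definition Rmap (R : realType) (r : R) : R := 1 / (2 * Num.sqrt (1 - r ^+ 2)).

(* S_2 = eps_2, S_3 = eps_3 and S_n = K_(n-3) + eps_3 for n >= 4.  The proof
   rests on three facts about points on a sphere of radius r centred at c.
   - Strict convexity: a point of the sphere on a chord is an endpoint of the
     chord, so the "no vertex inside an edge" condition is automatic for maps
     into a sphere (sphere_embeddingP).
   - Gram bound: if N + 1 points of the sphere are pairwise at distance 1, then
     |sum_i (p_i - c)| ^ 2 >= 0 yields r ^ 2 >= N / (2 (N + 1))
     (unit_simplex_radius).  K_(n-3) plus one vertex of eps_3 is a clique of
     size n - 2, which gives the non-existence part.
   - Construction: in R^2 x R^m, m = n - 3, put the clique vertices at s e_i,
     the three independent vertices at (p_e, a, ..., a) with p_e on a circle of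
     radius rho, and the centre at (0, b, ..., b); the parameters s, a, b, rho
     exist as soon as r ^ 2 > m / (2 (m + 1)) (construction_parameters).
   Finally R^j (1/2) = sqrt ((j + 1) / (2 (j + 2))) (iter_Rmap_half), which is
   exactly the Gram threshold, and for n = 2, 3 the vertices are placed at the
   points +-r e_j of a cross-polytope. *)

From HB Require Import structures.
From mathcomp Require Import all_boot all_order all_algebra.
From mathcomp Require Import reals ring lra.
Import Order.TTheory GRing.Theory Num.Theory.
Local Open Scope ring_scope.
Set Implicit Arguments. Unset Strict Implicit. Unset Printing Implicit Defensive.

Section SphericalEmbeddings.
Variable R : realType.

Lemma edistE k (x y : 'rV[R]_k) :
  edist x y ^+ 2 = \sum_(i < k) (x ord0 i - y ord0 i) ^+ 2.
Proof. by rewrite sqr_sqrtr // sumr_ge0 // => i _; apply: sqr_ge0. Qed.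

Lemma edist_ge0 k (x y : 'rV[R]_k) : 0 <= edist x y.
Proof. exact: sqrtr_ge0. Qed.

Lemma edist_eq k (x y : 'rV[R]_k) r :
  0 <= r -> edist x y ^+ 2 = r ^+ 2 -> edist x y = r.
Proof. by move=> r0 /eqP; rewrite eqrXn2 ?edist_ge0 // => /eqP. Qed.

Lemma edistC k (x y : 'rV[R]_k) : edist x y = edist y x.
Proof. by congr Num.sqrt; apply: eq_bigr => i _; rewrite -sqrrN opprB. Qed.

Lemma edistxx k (x : 'rV[R]_k) : edist x x = 0.
Proof.
by apply: edist_eq; rewrite // edistE big1 ?expr0n // => i _; rewrite subrr expr0n.
Qed.

Lemma edist_row_mx k1 k2 (x x' : 'rV[R]_k1) (y y' : 'rV[R]_k2) :
  edist (row_mx x y) (row_mx x' y') ^+ 2 = edist x x' ^+ 2 + edist y y' ^+ 2.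
Proof.
rewrite !edistE big_split_ord /=.
by congr (_ + _); apply: eq_bigr => i _; rewrite ?row_mxEl ?row_mxEr.
Qed.

Definition axis_point k (j : nat) (s : R) : 'rV[R]_k :=
  \row_(l < k) (if l == j :> nat then s else 0).

Lemma sum_indicator k j (x : R) :
  (j < k)%N -> \sum_(l < k) (if l == j :> nat then x else 0) = x.
Proof. by move=> hj; rewrite -big_mkcond big_ord1_eq hj. Qed.

Lemma edist_axis k j j' s s' : (j < k)%N -> (j' < k)%N ->
  edist (axis_point k j s) (axis_point k j' s') ^+ 2 =
  if j == j' then (s - s') ^+ 2 else s ^+ 2 + s' ^+ 2.
Proof.
move=> hj hj'; rewrite edistE; case: eqP => [<- | nj].
  rewrite -(sum_indicator ((s - s') ^+ 2) hj); apply: eq_bigr => l _.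
  by rewrite !mxE; case: eqP => _; rewrite // subrr expr0n.
rewrite -(sum_indicator (s ^+ 2) hj) -(sum_indicator (s' ^+ 2) hj') -big_split /=.
apply: eq_bigr => l _; rewrite !mxE.
case: (eqVneq (l : nat) j) => [lj | _]; case: (eqVneq (l : nat) j') => [lj' | _].
- by case: nj; rewrite -lj -lj'.
- by rewrite subr0 addr0.
- by rewrite sub0r sqrrN add0r.
- by rewrite subrr expr2 mulr0 addr0.
Qed.

Lemma edist_axis_const k j s a : (j < k)%N ->
  edist (axis_point k j s) (const_mx a) ^+ 2 = s ^+ 2 - 2 * s * a + k%:R * a ^+ 2.
Proof.
move=> hj; have -> : k%:R * a ^+ 2 = \sum_(l < k) a ^+ 2.
  by rewrite sumr_const card_ord mulr_natl.
rewrite -(sum_indicator (s ^+ 2 - 2 * s * a) hj) -big_split edistE /=.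
apply: eq_bigr => l _; rewrite !mxE.
by case: eqP => _; rewrite ?add0r ?sub0r ?sqrrN //; ring.
Qed.

Lemma edist_const k a b :
  edist (const_mx a : 'rV[R]_k) (const_mx b) ^+ 2 = k%:R * (a - b) ^+ 2.
Proof.
rewrite edistE -[k in RHS]card_ord mulr_natl -sumr_const.
by apply: eq_bigr => l _; rewrite !mxE.
Qed.

Lemma axis_point_inj k j j' s s' : (j < k)%N -> (j' < k)%N -> s != 0 ->
  axis_point k j s = axis_point k j' s' -> j = j' /\ s = s'.
Proof.
move=> hj hj' s0 e; have := edist_axis s s' hj hj'.
rewrite e edistxx expr0n /=; case: eqP => [-> | _] /esym/eqP.
  by rewrite sqrf_eq0 subr_eq0 => /eqP.
by rewrite paddr_eq0 ?sqr_ge0 // sqrf_eq0 (negbTE s0).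
Qed.

(* Strict convexity of spheres: the chord [a, b] meets the sphere only at a
   and b, by the identity
   |p - c|^2 = (1-t)|a - c|^2 + t|b - c|^2 - t(1-t)|a - b|^2. *)
Lemma sphere_chord k (a b p c : 'rV[R]_k) r :
  edist a c = r -> edist b c = r -> edist p c = r -> on_segment p a b ->
  p = a \/ p = b.
Proof.
move=> ha hb hp [t [/andP[t0 t1] ep]].
have chord_identity : edist p c ^+ 2 =
    (1 - t) * edist a c ^+ 2 + t * edist b c ^+ 2 - t * (1 - t) * edist a b ^+ 2.
  rewrite !edistE !mulr_sumr -big_split /= -sumrB; apply: eq_bigr => i _.
  by rewrite ep !mxE; ring.
have : t * (1 - t) * edist a b ^+ 2 = 0.
  by move: chord_identity; rewrite ha hb hp; lra.
move/eqP; rewrite 2!mulf_eq0 subr_eq0 => /orP[/orP[] | ] /eqP e.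
- by left; rewrite ep e subr0 scale1r scale0r addr0.
- by right; rewrite ep -e subrr scale0r scale1r add0r.
- suff eab : a = b by left; rewrite ep -eab -scalerDl subrK scale1r.
  apply/matrixP => i j; rewrite (ord1 i); apply/eqP; rewrite -subr_eq0 -sqrf_eq0.
  move: e; rewrite edistE => /eqP; rewrite psumr_eq0 => [/allP | l _].
    by move/(_ j (mem_index_enum j)).
  exact: sqr_ge0.
Qed.

(* On a sphere the "no vertex inside an edge" condition is automatic, so an
   injective map onto a sphere sending edges to unit segments is a spherical
   embedding. *)
Lemma sphere_embeddingP (G : graph) k (f : vert G -> 'rV[R]_k) c r :
  injective f -> (forall u v, adj u v -> edist (f u) (f v) = 1) ->
  (forall v, edist (f v) c = r) -> spherical_embedding G k r.
Proof.
move=> finj fd fs; exists f, c; split=> //; split=> //; split=> // u v w _ wu wv seg.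
have [/finj e | /finj e] := sphere_chord (fs u) (fs v) (fs w) seg.
- by move: wu; rewrite e eqxx.
- by move: wv; rewrite e eqxx.
Qed.

Definition cross_point k r (i : nat) : 'rV[R]_k :=
  axis_point k i./2 (if odd i then - r else r).

Lemma edist_cross_point k r i : (i < k.*2)%N ->
  edist (cross_point k r i) (const_mx 0) ^+ 2 = r ^+ 2.
Proof.
rewrite -ltn_half_double => hi; rewrite edist_axis_const // mulr0 subr0 expr0n /=.
by rewrite mulr0 addr0; case: odd; rewrite ?sqrrN.
Qed.

Lemma cross_point_inj k r i j : 0 < r -> (i < k.*2)%N -> (j < k.*2)%N ->
  cross_point k r i = cross_point k r j -> i = j.
Proof.
rewrite -!ltn_half_double => r0 hi hj /axis_point_inj[] //.
  by case: odd; rewrite ?oppr_eq0 gt_eqF.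
move=> half_ij sign_ij; rewrite -[i]odd_double_half -[j]odd_double_half half_ij.
by congr (_ + _); move: sign_ij; case: (odd i); case: (odd j) => // sign_ij; exfalso; lra.
Qed.

(* eps_n has no edges: it suffices to place n distinct points on a sphere,
   e.g. the vertices +-r e_j of a cross-polytope, which needs 2 k >= n. *)
Lemma eps_spherical n k (r : R) : (n <= k.*2)%N -> 0 < r -> spherical_embedding (eps n) k r.
Proof.
move=> nk r0; have lt_nk (i : 'I_n) : (i < k.*2)%N by apply: leq_trans nk.
apply: (@sphere_embeddingP (eps n) k (fun i => cross_point k r i) (const_mx 0)) => //.
- by move=> i j /(cross_point_inj r0 (lt_nk i) (lt_nk j)) /val_inj.
- by move=> i; apply: edist_eq; [exact: ltW | exact: edist_cross_point].
Qed.

Definition dotv k (x y : 'rV[R]_k) : R := \sum_(i < k) x ord0 i * y ord0 i.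

Lemma dotv_suml k (I : Type) (s : seq I) (F : I -> 'rV[R]_k) y :
  dotv (\sum_(i <- s) F i) y = \sum_(i <- s) dotv (F i) y.
Proof.
by rewrite /dotv exchange_big; apply: eq_bigr => j _; rewrite summxE mulr_suml.
Qed.

Lemma dotvC k (x y : 'rV[R]_k) : dotv x y = dotv y x.
Proof. by apply: eq_bigr => i _; rewrite mulrC. Qed.

Lemma dotv_ge0 k (x : 'rV[R]_k) : 0 <= dotv x x.
Proof. by apply: sumr_ge0 => i _; rewrite -expr2 sqr_ge0. Qed.

Lemma dotv_polar k (x y c : 'rV[R]_k) :
  2 * dotv (x - c) (y - c) = edist x c ^+ 2 + edist y c ^+ 2 - edist x y ^+ 2.
Proof.
rewrite !edistE /dotv -big_split /= -sumrB mulr_sumr; apply: eq_bigr => i _.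
by rewrite !mxE; ring.
Qed.

(* Gram bound: N + 1 points of a sphere of radius r at mutual distance 1 force
   r ^ 2 >= N / (2 (N + 1)), because |sum_i (p_i - c)| ^ 2 >= 0. *)
Lemma unit_simplex_radius N k (p : 'I_N.+1 -> 'rV[R]_k) c r :
  (forall i j, i != j -> edist (p i) (p j) = 1) -> (forall i, edist (p i) c = r) ->
  N%:R / (2 * N.+1%:R) <= r ^+ 2.
Proof.
move=> unit_pq on_sphere; pose u i := p i - c.
have gram i j : dotv (u j) (u i) = r ^+ 2 - 1 / 2 + (if j == i then 1 / 2 else 0).
  have := dotv_polar (p j) (p i) c; rewrite !on_sphere.
  case: eqP => [-> | /eqP ji]; first by rewrite edistxx /u; lra.
  by rewrite unit_pq /u //; lra.
have row_sum i : \sum_(j < N.+1) dotv (u j) (u i) = (r ^+ 2 - 1 / 2) *+ N.+1 + 1 / 2.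
  rewrite (eq_bigr _ (fun j _ => gram i j)) big_split /= sumr_const card_ord.
  by rewrite -big_mkcond big_pred1_eq.
have := dotv_ge0 (\sum_(i < N.+1) u i); rewrite dotv_suml.
under eq_bigr do rewrite dotvC dotv_suml row_sum.
have eN : N.+1%:R = N%:R + 1 :> R by rewrite natr1.
rewrite sumr_const card_ord pmulrn_lge0 // -mulr_natr eN => total_ge0.
have N0 : 0 <= N%:R :> R := ler0n _ N.
by rewrite ler_pdivrMr; lra.
Qed.

(* Non-existence below the threshold: K_m together with one vertex of eps_3
   is a clique of size m + 1, hence r ^ 2 >= m / (2 (m + 1)). *)
Lemma join_radius_bound m k (r : R) :
  spherical_embedding (join (complete m) (eps 3)) k r -> m%:R / (2 * m.+1%:R) <= r ^+ 2.
Proof.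
move=> [f [c [[_ [unit_edges _]] on_sphere]]].
pose g (i : 'I_m.+1) : vert (join (complete m) (eps 3)) :=
  if unlift ord_max i is Some a then inl a else inr ord0.
apply: (unit_simplex_radius (p := f \o g) (c := c)) => [i j ij | i]; last exact: on_sphere.
apply: unit_edges; rewrite /g.
case: (unliftP ord_max i) => [a ei | ei]; case: (unliftP ord_max j) => [b ej | ej] //=.
- by apply: contraNneq ij => ab; rewrite ei ej ab.
- by move: ij; rewrite ei ej eqxx.
Qed.

Lemma Rmap_threshold (m : R) : 0 <= m ->
  Rmap (Num.sqrt (m / (2 * (m + 1)))) = Num.sqrt ((m + 1) / (2 * (m + 1 + 1))).
Proof.
move=> m0; rewrite /Rmap sqr_sqrtr; last by apply: divr_ge0; lra.
set t := Num.sqrt _.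
have hq : 1 - m / (2 * (m + 1)) = (m + 2) / (2 * (m + 1)) by field; lra.
have q0 : 0 < (m + 2) / (2 * (m + 1)) by apply: divr_gt0; lra.
have t2 : t ^+ 2 = (m + 2) / (2 * (m + 1)) by rewrite sqr_sqrtr hq // ltW.
have t0 : 0 < t by rewrite sqrtr_gt0 hq.
have -> : (m + 1) / (2 * (m + 1 + 1)) = (1 / (2 * t)) ^+ 2.
  by rewrite expr_div_n expr1n exprMn t2; field; lra.
by rewrite sqrtr_sqr ger0_norm // divr_ge0 //; lra.
Qed.

Lemma iter_Rmap_half j :
  iter j (@Rmap R) (1 / 2) = Num.sqrt (j.+1%:R / (2 * j.+2%:R)).
Proof.
elim: j => [|j IH].
  have -> : 1%:R / (2 * 2%:R) = (1 / 2) ^+ 2 :> R by field.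
  by rewrite sqrtr_sqr ger0_norm //; lra.
by rewrite iterS IH -[j.+2%:R]natr1 Rmap_threshold ?ler0n // !natr1.
Qed.

(* Parameters of the explicit embedding of K_m + eps_3 in R^2 x R^m: clique
   vertices s e_i, independent vertices (rho-circle point, a, ..., a), centre
   (0, b, ..., b).  With s ^ 2 = 1 / 2 and d = sqrt (m r ^ 2 - (m - 1) / 2),
   b = (s + d) / m solves the clique--centre equation, a = s (s + d) / (m d)
   is forced by the two equations of the independent vertices, and rho ^ 2 is
   what remains; d and rho are real exactly when r ^ 2 > m / (2 (m + 1)). *)
Lemma construction_parameters (m r : R) : 0 < m -> m / (2 * (m + 1)) < r ^+ 2 ->
  exists s a b rho : R,
    [/\ 2 * s ^+ 2 = 1, s ^+ 2 - 2 * s * b + m * b ^+ 2 = r ^+ 2,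
        rho ^+ 2 + (s ^+ 2 - 2 * s * a + m * a ^+ 2) = 1,
        rho ^+ 2 + m * (a - b) ^+ 2 = r ^+ 2 & 0 < rho].
Proof.
move=> m0 hr.
have hr' : m < r ^+ 2 * (2 * (m + 1)) by rewrite -ltr_pdivrMr //; lra.
set D := m * r ^+ 2 - (m - 1) / 2.
have D0 : 0 < D.
  have : m * m < r ^+ 2 * (2 * (m + 1)) * m by rewrite ltr_pM2r.
  by rewrite /D; nra.
set s := Num.sqrt (1 / 2 : R); set d := Num.sqrt D.
have hs : s ^+ 2 = 1 / 2 by rewrite sqr_sqrtr //; lra.
have hd : d ^+ 2 = D by rewrite sqr_sqrtr //; lra.
have d0 : 0 < d by rewrite sqrtr_gt0.
set q := ((m + 1) * r ^+ 2 / 2 - m / 4) / D.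
have q0 : 0 < q by rewrite divr_gt0 //; lra.
set rho := Num.sqrt q.
have hq : rho ^+ 2 = q by rewrite sqr_sqrtr //; lra.
have mn0 : m != 0 by rewrite gt_eqF.
have dn0 : d != 0 by rewrite gt_eqF.
have Dn0 : D != 0 by rewrite gt_eqF.
have D2 : m * r ^+ 2 * 2 - (m - 1) != 0 by rewrite gt_eqF //; move: D0; rewrite /D; lra.
exists s, (s * (s + d) / (m * d)), ((s + d) / m), rho; split.
- by rewrite hs; lra.
- transitivity ((d ^+ 2 - s ^+ 2) / m + s ^+ 2); first by field.
  by rewrite hd hs /D; field.
- transitivity (s ^+ 2 * (s ^+ 2 - d ^+ 2) / (m * d ^+ 2) + s ^+ 2 + rho ^+ 2).
    by field; rewrite mn0 dn0.
  by rewrite hd hs hq /q; move: Dn0; rewrite /D => Dn0; field; rewrite mn0 D2.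
- transitivity ((s ^+ 2 - d ^+ 2) ^+ 2 / (m * d ^+ 2) + rho ^+ 2).
    by field; rewrite mn0 dn0.
  by rewrite hd hs hq /q; move: Dn0; rewrite /D => Dn0; field; rewrite mn0 D2.
- by rewrite /rho sqrtr_gt0.
Qed.

Lemma join_embedding_spherical m (r s a b rho : R) : 0 <= r ->
  2 * s ^+ 2 = 1 -> s ^+ 2 - 2 * s * b + m%:R * b ^+ 2 = r ^+ 2 ->
  rho ^+ 2 + (s ^+ 2 - 2 * s * a + m%:R * a ^+ 2) = 1 ->
  rho ^+ 2 + m%:R * (a - b) ^+ 2 = r ^+ 2 -> 0 < rho ->
  spherical_embedding (join (complete m) (eps 3)) (2 + m) r.
Proof.
move=> r0 hs hb ha hab rho0.
pose f (v : vert (join (complete m) (eps 3))) : 'rV[R]_(2 + m) :=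
  match v with
  | inl i => row_mx (const_mx 0) (axis_point m i s)
  | inr e => row_mx (cross_point 2 rho e) (const_mx a)
  end.
have lt_e (e : 'I_3) : (e < 2.*2)%N by apply: ltn_trans (ltn_ord e) _.
have on_sphere v : edist (f v) (row_mx (const_mx 0) (const_mx b)) = r.
  apply: edist_eq r0 _; case: v => [i | e]; rewrite edist_row_mx.
  - by rewrite edistxx expr2 mulr0 add0r edist_axis_const.
  - by rewrite edist_cross_point // edist_const.
have unit_edges u v : adj u v -> edist (f u) (f v) = 1.
  move=> uv; apply: edist_eq; rewrite // expr1n.
  case: u v uv => [i | e] [j | e'] //= ij; rewrite edist_row_mx.
  - rewrite edistxx expr2 mulr0 add0r edist_axis //.
    by case: eqP => [/val_inj ij' | _]; [move: ij; rewrite ij' eqxx | lra].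
  - by rewrite edistC edist_cross_point // edist_axis_const.
  - by rewrite [edist (const_mx a) _]edistC edist_cross_point // edist_axis_const.
apply: (sphere_embeddingP _ unit_edges on_sphere).
move=> u v fuv; case: (boolP (adj u v)) => [/unit_edges | ].
  by rewrite fuv edistxx => /eqP; rewrite eq_sym oner_eq0.
case: u v fuv => [i | e] [j | e'] //=.
- by move=> _ /negPn/eqP ->.
- by move=> /eq_row_mx[/(cross_point_inj rho0 (lt_e e) (lt_e e'))/val_inj -> _].
Qed.

Lemma join_spherical m (r : R) : (0 < m)%N -> m%:R / (2 * m.+1%:R) < r ^+ 2 -> 0 < r ->
  spherical_embedding (join (complete m) (eps 3)) (2 + m) r.
Proof.
move=> m0 hr r0; rewrite -[m.+1%:R]natr1 in hr.
have m_pos : 0 < m%:R :> R by rewrite ltr0n.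
have [s [a [b [rho [hs hb ha hab rho0]]]]] := construction_parameters m_pos hr.
exact: join_embedding_spherical (ltW r0) hs hb ha hab rho0.
Qed.

End SphericalEmbeddings.

Theorem mainTheorem19 (R : realType) (n : nat) :
  (2 <= n)%N ->
  ((n <= 3)%N ->
     forall r : R, 0 < r < 1 -> spherical_embedding (S_graph n) n.-1 r) /\
  ((4 <= n)%N ->
     (forall r : R, iter (n - 4) (@Rmap R) (1 / 2) < r < 1 ->
        spherical_embedding (S_graph n) n.-1 r) /\
     (forall r : R, r < iter (n - 4) (@Rmap R) (1 / 2) ->
        ~ spherical_embedding (S_graph n) n.-1 r)).
Proof.
move=> n2; split.
  move=> n3 r /andP[r0 _].
  by case: n n2 n3 => [|[|[|[|n]]]] // _ _; apply: eps_spherical.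
move=> n4; case: n n2 n4 => [|[|[|[|k]]]] // _ _.
have -> : (k.+4 - 4 = k)%N by rewrite -addn4 addnK.
rewrite iter_Rmap_half; split.
- move=> r /andP[q_lt_r _].
  have r0 : 0 < r by apply: le_lt_trans q_lt_r; apply: sqrtr_ge0.
  apply: join_spherical => //.
  by rewrite -(ltr_sqrt _ (exprn_gt0 2 r0)) sqrtr_sqr ger0_norm // ltW.
- move=> r r_lt_q embedding.
  have r0 : 0 <= r.
    by case: embedding => f [c [_ on_sphere]]; rewrite -(on_sphere (inl ord0)) edist_ge0.
  have := join_radius_bound embedding; rewrite -(ler_sqrt _ (sqr_ge0 r)).
  by rewrite sqrtr_sqr ger0_norm // leNgt r_lt_q.
Qed.
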